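(* Let $K$ be a field and $K\langle x,y\rangle$ the free unitary associative algebra of rank $2$ over $K$. Let $V=\mathrm{span}([x,y]^k\mid k\ge 0)$ where $[x,y]=xy-yx$. Let $u(x,y)\in K\langle x,y\rangle\setminus V$ be written as $u=\sum\gamma_{ab}u_{ab}$, $\gamma_{ab}\in K$, in the basis of elements $$u_{ab}=x^{a_1}y^{b_1}[x,y]x^{a_2}y^{b_2}\cdots x^{a_r}y^{b_r}[x,y]x^{a_{r+1}}y^{b_{r+1}},\quad a_i,b_i,r\ge0,$$ and let $\rho=(\alpha x+p(y),\beta y+\gamma)$, with $\alpha,\beta\in K\setminus\{0\}$, $\gamma\in K$, $p(y)\in K[y]$ of degree at least $2$, be a nonaffine triangular automorphism. If $a_1=\cdots=a_{r+1}=0$ for all summands $u_{ab}$ with nonzero coefficient $\gamma_{ab}$, then $\deg u=\deg(\rho u)$. If some $a_i\neq0$ in some summand $u_{ab}$ with $\gamma_{ab}\neq0$, and $\deg p(y)=k>\deg u$, then $\deg(\overline{\rho u})\ge k$.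
   Context: The elements $u_{ab}$ above form a vector space basis of $K\langle x,y\rangle$. The automorphism $\rho=(f,g)$ means $\rho x=f$, $\rho y=g$, and $\rho u=u(f,g)$. $\deg$ denotes total degree. Since $V$ is a graded subspace, the quotient $\overline{K\langle x,y\rangle}=K\langle x,y\rangle/V$ inherits the grading; for $w\notin V$, $\overline{w}$ denotes its image and $\deg\overline{w}$ is the largest $s$ such that the degree-$s$ homogeneous component of $w$ does not lie in $V$. *)

From mathcomp Require Import all_boot all_algebra.
Set Implicit Arguments. Unset Strict Implicit. Unset Printing Implicit Defensive.
Import GRing.Theory.

(* The free unitary associative algebra K<x,y> over a field K, modelled
   concretely: a word in x,y is a [seq bool] (false = x, true = y), and an
   element is a formal finite linear combination [seq (coefficient, word)].
   Two such lists denote the same element iff they have the same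
   coefficient function [fa_coef]; all statements below only depend on
   elements through [fa_coef]. *)
Section FreeAlgebra.
Variable K : fieldType.

Definition word := seq bool.
Definition fa := seq (K * word).

Definition fa_coef (u : fa) (w : word) : K :=
  (\sum_(t <- u | t.2 == w) t.1)%R.
Definition fa_eq (u v : fa) : Prop := forall w, fa_coef u w = fa_coef v w.

Definition fa_add (u v : fa) : fa := u ++ v.
Definition fa_scale (c : K) (u : fa) : fa := [seq ((c * t.1)%R, t.2) | t <- u].
Definition fa_mul (u v : fa) : fa :=
  [seq ((s.1 * t.1)%R, s.2 ++ t.2) | s <- u, t <- v].
Definition fa_one : fa := [:: (1%R, [::])].
Definition fa_const (c : K) : fa := [:: (c, [::])].
Definition fa_x : fa := [:: (1%R, [:: false])].
Definition fa_y : fa := [:: (1%R, [:: true])].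
Definition fa_pow (u : fa) (n : nat) : fa := iter n (fa_mul u) fa_one.

Definition fa_comm : fa := fa_add (fa_mul fa_x fa_y) (fa_scale (-1)%R (fa_mul fa_y fa_x)).

Definition inV (u : fa) : Prop :=
  exists (n : nat) (c : nat -> K),
    fa_eq u (flatten [seq fa_scale (c i) (fa_pow fa_comm i) | i <- iota 0 n]).

(* total degree (u assumed nonzero) *)
Definition fa_deg (u : fa) : nat :=
  \max_(t <- u | fa_coef u t.2 != 0%R) size t.2.

Definition hom_comp (u : fa) (s : nat) : fa := [seq t <- u | size t.2 == s].

Definition subst_word (f g : fa) (w : word) : fa :=
  foldr (fun b acc => fa_mul (if b then g else f) acc) fa_one w.
Definition fa_subst (f g : fa) (u : fa) : fa :=
  flatten [seq fa_scale t.1 (subst_word f g t.2) | t <- u].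

Definition poly_y (p : {poly K}) : fa :=
  flatten [seq fa_scale p`_i (fa_pow fa_y i) | i <- iota 0 (size p)].

Definition rho_tri (alpha beta gamma : K) (p : {poly K}) (u : fa) : fa :=
  fa_subst (fa_add (fa_scale alpha fa_x) (poly_y p))
           (fa_add (fa_scale beta fa_y) (fa_const gamma)) u.

(* basis element u_ab = x^{a1}y^{b1}[x,y]x^{a2}y^{b2}...[x,y]x^{a_{r+1}}y^{b_{r+1}},
   indexed by the nonempty list [:: (a1,b1); ...; (a_{r+1},b_{r+1})] *)
Definition fa_block (a b : nat) : fa := fa_mul (fa_pow fa_x a) (fa_pow fa_y b).
Fixpoint u_ab (ab : seq (nat * nat)) : fa :=
  match ab with
  | [::] => fa_one
  | [:: (a, b)] => fa_block a b
  | (a, b) :: rest => fa_mul (fa_block a b) (fa_mul fa_comm (u_ab rest))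
  end.

Definition lincomb_uab (s : seq (K * seq (nat * nat))) : fa :=
  flatten [seq fa_scale t.1 (u_ab t.2) | t <- s].

End FreeAlgebra.

From mathcomp Require Import all_boot all_algebra.
From mathcomp Require Import finmap monalg.
From mathcomp Require Import zify.
Set Implicit Arguments. Unset Strict Implicit. Unset Printing Implicit Defensive.
Import GRing.Theory.

(* Order words degree-lexicographically, with x < y.  This order is
   multiplicative, so leading words multiply.  The leading word of u_ab is
   x^a1 y^b1 (yx) x^a2 y^b2 ... (yx) x^a(r+1) y^b(r+1), and distinct indices
   give distinct words, so the leading word of u is the largest of these and
   deg u is its length.  The leading words of rho x, rho y and
   rho [x,y] = alpha beta [x,y] are y^k, y and yx, so rho u_ab has the
   leading word of u_ab' with ab' = ((0, k a_i + b_i))_i, and the same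
   argument applies to rho u as long as ab |-> ab' is injective on the
   indices of u.  If all a_i vanish, ab' = ab and deg (rho u) = deg u.
   Otherwise, if deg u < k, every b_i is below k, which gives injectivity,
   and the leading word w of rho u has length at least k.  It has
   sum (k a_i + b_i) more y's than x's; this vanishes only when ab' = ab,
   and then |w| <= deg u < k.  So w is unbalanced, whereas every word in
   the support of an element of V is balanced. *)

Lemma uniq_map_inj_in (T1 T2 : eqType) (f : T1 -> T2) (s : seq T1) :
  uniq (map f s) -> {in s &, injective f}.
Proof.
elim: s => [|z s IH] //= /andP[fz us] x y.
rewrite !in_cons => /predU1P[-> | xs] /predU1P[-> | ys] // fxy.
- by rewrite fxy map_f in fz.
- by rewrite -fxy map_f in fz.
- exact: IH.
Qed.

Lemma bigmax_seq_attained (T : eqType) (s : seq T) (F : T -> nat) :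
  s != [::] -> exists2 t, t \in s & F t = \max_(i <- s) F i.
Proof.
elim: s => [|x [|y s] IH] // _; first by exists x; rewrite ?mem_head ?big_seq1.
have [t ts Ft] := IH isT; rewrite big_cons -Ft.
have [_ | _] := leqP (F x) (F t); first by exists t; rewrite // in_cons ts orbT.
by exists x; rewrite ?mem_head.
Qed.

Lemma sum_neq0 (V : nmodType) (I : eqType) (r : seq I) (P : pred I) (F : I -> V) :
  (\sum_(i <- r | P i) F i != 0)%R -> has (fun i => P i && (F i != 0)%R) r.
Proof.
apply: contraNT => /hasPn F0; rewrite big_seq_cond big1 // => i /andP[ir Pi].
by apply/eqP; move: (F0 i ir); rewrite Pi negbK.
Qed.

Section Commutators.
Local Open Scope ring_scope.

Lemma commutator_shift (R : pzRingType) (x y p c : R) :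
  p * y = y * p -> (forall z, c * z = z * c) ->
  (x + p) * (y + c) - (y + c) * (x + p) = x * y - y * x.
Proof.
move=> py cz; rewrite !(mulrDl, mulrDr) -(cz x) -(cz p) py.
by rewrite (addrACA (y * x)) (addrC (y * x + c * x)) addrKA (addrC (y * x)) addrKA.
Qed.

(* Stated for an lalgType with right-associative scaling: {malg} over a
   noncommutative monoid is only an lalgType in the library. *)
Lemma commutator_affine (R : comNzRingType) (A : lalgType R) {X Y P C : A} {a b : R} :
  (forall c (x y : A), c *: (x * y) = x * (c *: y)) ->
  P * Y = Y * P -> (forall Z, C * Z = Z * C) ->
  (a *: X + P) * (b *: Y + C) - (b *: Y + C) * (a *: X + P) =
  (a * b) *: (X * Y - Y * X).
Proof.
move=> scaleAr PY CZ.
have PbY : P * (b *: Y) = b *: Y * P by rewrite -scaleAr PY scalerAl.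
by rewrite (commutator_shift _ PbY CZ) -!scalerAl -!scaleAr !scalerA (mulrC b) -scalerBr.
Qed.

End Commutators.

Fixpoint bin (w : word) : nat :=
  if w is b :: w' then b * 2 ^ size w' + bin w' else 0.

(* [key w] is the number written 1w in binary (x = 0, y = 1): comparing keys
   compares words by length, then lexicographically. *)
Definition key (w : word) : nat := 2 ^ size w + bin w.

Lemma bin_lt w : bin w < 2 ^ size w.
Proof. by elim: w => [|[] w IH] //=; rewrite expnS; lia. Qed.

Lemma bin_cat w v : bin (w ++ v) = bin w * 2 ^ size v + bin v.
Proof. by elim: w => [|b w IH] //=; rewrite IH size_cat expnD; lia. Qed.

Lemma bin_inj w v : size w = size v -> bin w = bin v -> w = v.
Proof.
elim: w v => [|b w IH] [|c v] //= [sz] e.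
have := bin_lt w; have := bin_lt v; move: e; rewrite -sz => e lt_v lt_w.
have bc : b = c by move: e; case: b; case: c => //=; lia.
by rewrite bc (IH v) //; move: e; rewrite bc; lia.
Qed.

Lemma key_cat w v : key (w ++ v) = key w * 2 ^ size v + bin v.
Proof. by rewrite /key bin_cat size_cat expnD; lia. Qed.

Lemma leq_key_size w v : key w <= key v -> size w <= size v.
Proof.
move=> le; rewrite leqNgt; apply/negP => lt_vw.
have : 2 ^ (size v).+1 <= 2 ^ size w by rewrite leq_exp2l.
by move: le; have := bin_lt v; rewrite /key expnS; lia.
Qed.

Lemma key_lt_size w v : size w < size v -> key w < key v.
Proof.
move=> lt_wv; have : 2 ^ (size w).+1 <= 2 ^ size v by rewrite leq_exp2l.
by have := bin_lt w; rewrite /key expnS; lia.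
Qed.

Lemma key_inj : injective key.
Proof.
move=> w v e; have sz : size w = size v.
  by apply/eqP; rewrite eqn_leq !leq_key_size ?e.
by apply: (bin_inj sz); move: e; rewrite /key sz; lia.
Qed.

Lemma leq_key_cat v1 v2 w1 w2 :
  key v1 <= key w1 -> key v2 <= key w2 -> key (v1 ++ v2) <= key (w1 ++ w2).
Proof.
move=> le1 le2; rewrite !key_cat.
have le_exp : 2 ^ size v2 <= 2 ^ size w2 by rewrite leq_exp2l // leq_key_size.
have w1_gt0 : 0 < key w1 by rewrite addn_gt0 expn_gt0.
apply: leq_trans (_ : key w1 * 2 ^ size v2 + bin v2 <= _).
  by rewrite leq_add2r leq_mul2r le1 orbT.
by move: le2; rewrite [key v2]/key [key w2]/key; nia.
Qed.

Lemma eq_cat_key v1 v2 w1 w2 : key v1 <= key w1 -> key v2 <= key w2 ->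
  (v1 ++ v2 == w1 ++ w2) = (v1 == w1) && (v2 == w2).
Proof.
move=> /leq_key_size le1 /leq_key_size le2.
apply/idP/idP => [/eqP e | /andP[/eqP-> /eqP->] //].
have sz : size v1 = size w1 by have := congr1 (@size bool) e; rewrite !size_cat; lia.
by rewrite -eqseq_cat // e.
Qed.

(* Each [x,y] = xy - yx contributes its larger word yx. *)
Fixpoint lead_word (ab : seq (nat * nat)) : word :=
  match ab with
  | [::] => [::]
  | [:: (a, b)] => nseq a false ++ nseq b true
  | (a, b) :: rest => nseq a false ++ nseq b true ++ [:: true; false] ++ lead_word rest
  end.

Lemma lead_word_cons q q' rest :
  lead_word [:: q, q' & rest] =
  lead_word [:: q] ++ [:: true; false] ++ lead_word (q' :: rest).
Proof. by case: q => a b; rewrite /= -catA. Qed.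

Lemma lead_word_consE a b q rest : lead_word [:: (a, b), q & rest] =
  nseq a false ++ ~~ false :: nseq b true ++ ~~ true :: lead_word (q :: rest).
Proof. by rewrite lead_word_cons /= -catA; congr (_ ++ _); elim: b => //= b ->. Qed.

Lemma nseq_cons_inj (c : bool) n n' s s' :
  nseq n c ++ ~~ c :: s = nseq n' c ++ ~~ c :: s' -> n = n' /\ s = s'.
Proof.
elim: n n' => [|n IH] [|n'] /=.
- by case=> ->.
- by case: c.
- by clear IH; case: c.
- by case=> /IH[-> ->].
Qed.

Lemma lead_word_inj ab ab' : 0 < size ab -> 0 < size ab' ->
  lead_word ab = lead_word ab' -> ab = ab'.
Proof.
have single_cons a b a' b' q rest :
    nseq a false ++ nseq b true <> lead_word [:: (a', b'), q & rest].
  rewrite lead_word_consE; case: b => [|b] e.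
    by have := congr1 (count id) e; rewrite cats0 !count_cat !count_nseq /=; lia.
  move: e => /= /nseq_cons_inj[_ /(congr1 (count negb))].
  by rewrite !count_cat !count_nseq /=; lia.
elim: ab ab' => [|[a b] [|q rest] IH] // [|[a' b'] [|q' rest']] // _ _.
- move=> /= e; have := congr1 (count negb) e; have := congr1 (count id) e.
  by rewrite !count_cat !count_nseq /= => ? ?; congr [:: (_, _)]; lia.
- by move/single_cons.
- by move/esym/single_cons.
- by rewrite !lead_word_consE => /nseq_cons_inj[-> /nseq_cons_inj[-> /IH ->]].
Qed.

Lemma pair_le_size_lead_word (ab : seq (nat * nat)) q :
  q \in ab -> q.1 + q.2 <= size (lead_word ab).
Proof.
elim: ab => [|[a b] [|q' rest] IH] //; rewrite in_cons.
  by rewrite orbF => /eqP->; rewrite size_cat !size_nseq.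
rewrite lead_word_cons [lead_word [:: _]]/= !size_cat !size_nseq.
by case/predU1P => [-> /= | /IH]; lia.
Qed.

Lemma count_lead_word (ab : seq (nat * nat)) : 0 < size ab ->
  count id (lead_word ab) + \sum_(q <- ab) q.1 =
  count negb (lead_word ab) + \sum_(q <- ab) q.2.
Proof.
elim: ab => [|[a b] [|q rest] IH] // _.
  by rewrite !big_seq1 /= !count_cat !count_nseq /=; lia.
move: (IH isT); rewrite lead_word_cons; set W := lead_word (q :: rest).
by rewrite ![\sum_(_ <- (a, b) :: _) _]big_cons /= !count_cat !count_nseq /=; lia.
Qed.

(* rho x has leading term p_k y^k, so rho (x^a y^b) has leading word y^(k a + b). *)
Definition rho_index (k : nat) (ab : seq (nat * nat)) : seq (nat * nat) :=
  [seq (0, k * q.1 + q.2) | q <- ab].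

Lemma rho_index_id k ab : all (fun q => q.1 == 0) ab -> rho_index k ab = ab.
Proof. by move=> /allP a0; apply: map_id_in => -[a b] /a0 /= /eqP->; rewrite muln0. Qed.

Lemma rho_index_inj k ab ab' : all (fun q => q.2 < k) ab -> all (fun q => q.2 < k) ab' ->
  rho_index k ab = rho_index k ab' -> ab = ab'.
Proof.
apply: (@inj_in_map _ _ _ [pred q | q.2 < k]) => -[a b] [a' b'] /= lt_b lt_b' [e].
have eb : b = b'.
  by have := congr1 (modn^~ k) e; rewrite /= !(mulnC k) !modnMDl !modn_small.
have : k * a = k * a' by lia.
by move/eqP; rewrite eqn_pmul2l ?(leq_ltn_trans _ lt_b) // eb => /eqP->.
Qed.

Lemma rho_index_balanced k ab : 0 < k -> 0 < size ab ->
  count id (lead_word (rho_index k ab)) = count negb (lead_word (rho_index k ab)) ->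
  all (fun q => q.1 == 0) ab.
Proof.
move=> k_gt0 ab_gt0; have := @count_lead_word (rho_index k ab).
rewrite size_map !big_map big1 // addn0 => /(_ ab_gt0) -> /eqP.
rewrite -[X in _ == X]addn0 eqn_add2l sum_nat_seq_eq0 => /allP ab0.
by apply/allP => q /ab0 /eqP /= h; apply/eqP; nia.
Qed.

Section FreeAlgebra.
Variable K : fieldType.
Local Notation Kxy := {malg K[{fmonom bool}]}.
Local Open Scope ring_scope.

Lemma malg_mulC (c : K) (f : Kxy) : f * c%:MP = c *: f.
Proof.
rewrite [in LHS](monalgE f) mulr_suml [in RHS](monalgE f) scaler_sumr.
apply: eq_bigr => m _; rewrite malgM_def fgmulUU mulm1.
by apply/malgP => m'; rewrite mcoeffZ !mcoeffU mulrnAr mulrC.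
Qed.

Lemma malg_scalerAr (c : K) (f g : Kxy) : c *: (f * g) = f * (c *: g).
Proof. by rewrite -[LHS]malg_mulC -mulrA malg_mulC. Qed.

Lemma malg_scaleM (a b : K) (f g : Kxy) : (a *: f) * (b *: g) = (a * b) *: (f * g).
Proof. by rewrite -scalerAl -malg_scalerAr scalerA. Qed.

Lemma mcoeff_msupp_sum (f : Kxy) m : \sum_(m' <- msupp f) f@_m' *+ (m' == m) = f@_m.
Proof.
by rewrite [in RHS](monalgE f) raddf_sum; apply: eq_bigr => m' _ /=; rewrite mcoeffU.
Qed.

Lemma mcoeffD_neq0 (f g : Kxy) m : (f + g)@_m != 0 -> f@_m != 0 \/ g@_m != 0.
Proof.
by rewrite mcoeffD; have [->|] := eqVneq f@_m 0; [rewrite add0r; right | left].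
Qed.

Lemma fmonomM (w v : word) : mmul (FMonom w) (FMonom v) = FMonom (w ++ v).
Proof. by apply/eqP; rewrite fmP fmM. Qed.

Lemma mcoeffM_neq0 (f g : Kxy) w : (f * g)@_(FMonom w) != 0 ->
  exists w1 w2, [/\ w = w1 ++ w2, f@_(FMonom w1) != 0 & g@_(FMonom w2) != 0].
Proof.
rewrite mcoeff_neq0 => /msuppM_le[[w1] [[w2] []]]; rewrite fmonomM -!mcoeff_neq0.
by move=> f1 g2 [->]; exists w1, w2.
Qed.

Definition mono (w : word) : Kxy := << FMonom w >>.

Lemma mcoeff_mono w v : (mono w)@_(FMonom v) = (w == v)%:R.
Proof. by rewrite mcoeffU1 fmP. Qed.

Lemma mcoeffZ_mono_neq0 c w v : (c *: mono w)@_(FMonom v) != 0 -> v = w.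
Proof.
by rewrite mcoeffZ mcoeff_mono; case: (w =P v) => [->|] // _; rewrite mulr0 eqxx.
Qed.

Lemma mono_mul w v : mono w * mono v = mono (w ++ v).
Proof. by rewrite malgM_def fgmulUU mulr1 fmonomM. Qed.

Lemma mono_nil : mono [::] = 1.
Proof. by apply/malgP => -[v]; rewrite mcoeff_mono mcoeff1 fmP fm1 eq_sym. Qed.

Lemma mono_nseqX c n : mono [:: c] ^+ n = mono (nseq n c).
Proof. by elim: n => [|n IH]; rewrite ?mono_nil // exprS IH mono_mul. Qed.

Definition comm_xy : Kxy := mono [:: false; true] - mono [:: true; false].

Lemma comm_pow_balanced i w :
  (comm_xy ^+ i)@_(FMonom w) != 0 -> count id w = count negb w.
Proof.
elim: i w => [|i IH] w.
  by rewrite expr0 -mono_nil mcoeff_mono; case: ([::] =P w) => [<-|_] //; rewrite eqxx.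
rewrite exprS => /mcoeffM_neq0[w1 [w2 [-> + /IH bal]]]; rewrite !count_cat bal.
rewrite mcoeffB !mcoeff_mono.
case: ([:: false; true] =P w1) => [<-|_] //; case: ([:: true; false] =P w1) => [<-|_] //.
by rewrite subrr eqxx.
Qed.

Definition is_lead (w : word) (f : Kxy) :=
  f@_(FMonom w) != 0 /\ forall v, f@_(FMonom v) != 0 -> (key v <= key w)%N.

Lemma is_lead_mono w : is_lead w (mono w).
Proof.
split=> [|v]; first by rewrite mcoeff_mono eqxx oner_neq0.
by rewrite mcoeff_mono; case: (w =P v) => [<-|] //; rewrite eqxx.
Qed.

Lemma is_leadZ c w f : c != 0 -> is_lead w f -> is_lead w (c *: f).
Proof.
move=> c0 [fw lf]; split=> [|v]; first by rewrite mcoeffZ mulf_neq0.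
by rewrite mcoeffZ mulf_eq0 negb_or => /andP[_ /lf].
Qed.

Lemma is_leadD w f g : is_lead w f ->
  (forall v, g@_(FMonom v) != 0 -> (key v < key w)%N) -> is_lead w (f + g).
Proof.
move=> [fw lf] lt_g; have gw : g@_(FMonom w) = 0.
  by apply/eqP; apply: contraT => /lt_g; rewrite ltnn.
split=> [|v /mcoeffD_neq0[/lf // | /lt_g /ltnW //]].
by rewrite mcoeffD gw addr0.
Qed.

Lemma mcoeffM_lead w1 w2 f g : is_lead w1 f -> is_lead w2 g ->
  (f * g)@_(FMonom (w1 ++ w2)) = f@_(FMonom w1) * g@_(FMonom w2).
Proof.
move=> [_ lf] [_ lg]; rewrite mcoeffMl -!mcoeff_msupp_sum big_distrlr /=.
apply: eq_bigr => -[v1] _; apply: eq_bigr => -[v2] _.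
have [->|/lf le1] := eqVneq f@_(FMonom v1) 0; first by rewrite !(mul0r, mul0rn).
have [->|/lg le2] := eqVneq g@_(FMonom v2) 0; first by rewrite !(mulr0, mul0rn).
rewrite fmonomM !fmP /= eq_cat_key //.
by case: (v1 == w1); case: (v2 == w2); rewrite /= ?mulr0n ?mulr1n ?mulr0 ?mul0r.
Qed.

Lemma is_leadM w1 w2 f g : is_lead w1 f -> is_lead w2 g -> is_lead (w1 ++ w2) (f * g).
Proof.
move=> lf lg; have [fw le_f] := lf; have [gw le_g] := lg.
split; first by rewrite mcoeffM_lead // mulf_neq0.
by move=> v /mcoeffM_neq0[v1 [v2 [-> /le_f le1 /le_g le2]]]; apply: leq_key_cat.
Qed.

Lemma is_lead_nseqX c m n f : is_lead (nseq m c) f -> is_lead (nseq (m * n) c) (f ^+ n).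
Proof.
move=> lf; elim: n => [|n IH].
  by rewrite muln0 expr0 -mono_nil; apply: is_lead_mono.
by rewrite mulnS nseqD exprS; apply: is_leadM.
Qed.

Lemma is_lead_comm : is_lead [:: true; false] comm_xy.
Proof.
rewrite /comm_xy addrC -scaleN1r; apply: is_leadD.
  by apply: is_leadZ (is_lead_mono _); rewrite oppr_eq0 oner_neq0.
by move=> v; rewrite mcoeff_mono; case: ([:: false; true] =P v) => [<-|] //; rewrite eqxx.
Qed.

(* Only the summand with the largest leading word reaches that word. *)
Lemma is_lead_sum (T : eqType) (s : seq T) (W : T -> word) (E : T -> Kxy) :
  s != [::] -> uniq (map W s) -> {in s, forall t, is_lead (W t) (E t)} ->
  exists2 t0, t0 \in s &
    is_lead (W t0) (\sum_(t <- s) E t) /\ key (W t0) = \max_(t <- s) key (W t).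
Proof.
move=> s_ne uW lead.
have [t0 t0s max_t0] := bigmax_seq_attained (fun t => key (W t)) s_ne.
have le_t0 t : t \in s -> (key (W t) <= key (W t0))%N.
  by move=> ts; rewrite max_t0 (leq_bigmax_seq t).
exists t0 => //; split=> //; split.
  rewrite raddf_sum (bigD1_seq t0) ?(map_uniq uW) //= big1_seq ?addr0.
    by case: (lead t0 t0s).
  move=> t /andP[tt0 ts]; apply: contraTeq tt0 => /(proj2 (lead t ts)) le_t.
  apply/negPn/eqP.
  by apply: (uniq_map_inj_in uW) => //; apply/key_inj/anti_leq; rewrite le_t le_t0.
move=> v; rewrite raddf_sum => /sum_neq0/hasP[t ts /= /(proj2 (lead t ts)) le_v].
exact: leq_trans le_v (le_t0 t ts).
Qed.

Definition emb (u : fa K) : Kxy := \sum_(t <- u) t.1 *: mono t.2.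

Lemma emb_coef u w : (emb u)@_(FMonom w) = fa_coef u w.
Proof.
rewrite raddf_sum /fa_coef [RHS]big_mkcond; apply: eq_bigr => t _ /=.
by rewrite mcoeffZ mcoeff_mono mulr_natr mulrb.
Qed.

Lemma fa_deg_lead u w : is_lead w (emb u) -> fa_deg u = size w.
Proof.
rewrite /is_lead emb_coef => -[uw lu]; apply/eqP; rewrite eqn_leq; apply/andP; split.
  by apply/bigmax_leqP_seq => t _; rewrite -emb_coef => /lu /leq_key_size.
have /hasP[t tu /andP[/eqP tw _]] : has (fun t => (t.2 == w) && (t.1 != 0)) u.
  exact: sum_neq0.
by rewrite -tw in uw *; apply: (leq_bigmax_seq t).
Qed.

Lemma emb_cat u v : emb (fa_add u v) = emb u + emb v.
Proof. exact: big_cat. Qed.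

Lemma emb_scale c u : emb (fa_scale c u) = c *: emb u.
Proof. by rewrite /emb big_map scaler_sumr; apply: eq_bigr => t _; rewrite scalerA. Qed.

Lemma emb_mul u v : emb (fa_mul u v) = emb u * emb v.
Proof.
rewrite /emb big_allpairs_dep mulr_suml; apply: eq_bigr => s _.
rewrite mulr_sumr; apply: eq_bigr => t _.
by rewrite malg_scaleM mono_mul.
Qed.

Lemma emb_flatten (T : Type) (r : seq T) (F : T -> fa K) :
  emb (flatten [seq F i | i <- r]) = \sum_(i <- r) emb (F i).
Proof. by rewrite /emb big_flatten big_map. Qed.

Lemma emb_one : emb (fa_one K) = 1.
Proof. by rewrite /emb big_seq1 scale1r mono_nil. Qed.

Lemma emb_pow u n : emb (fa_pow u n) = emb u ^+ n.
Proof. by elim: n => [|n IH]; rewrite ?emb_one // exprS /= emb_mul IH. Qed.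

Lemma emb_const c : emb (fa_const c) = c%:MP.
Proof. by rewrite /emb big_seq1 mono_nil -mul_malgC mulr1. Qed.

Lemma emb_x : emb (fa_x K) = mono [:: false].
Proof. by rewrite /emb big_seq1 scale1r. Qed.

Lemma emb_y : emb (fa_y K) = mono [:: true].
Proof. by rewrite /emb big_seq1 scale1r. Qed.

Lemma emb_comm : emb (fa_comm K) = comm_xy.
Proof. by rewrite emb_cat emb_scale !emb_mul emb_x emb_y !mono_mul scaleN1r. Qed.

Lemma emb_block a b : emb (fa_block K a b) = mono (nseq a false ++ nseq b true).
Proof. by rewrite emb_mul !emb_pow emb_x emb_y !mono_nseqX mono_mul. Qed.

Lemma emb_poly_y (p : {poly K}) :
  emb (poly_y p) = \sum_(i <- iota 0 (size p)) p`_i *: mono (nseq i true).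
Proof.
by rewrite emb_flatten; apply: eq_bigr => i _; rewrite emb_scale emb_pow emb_y mono_nseqX.
Qed.

Lemma emb_lincomb s : emb (lincomb_uab s) = \sum_(t <- s) t.1 *: emb (u_ab K t.2).
Proof. by rewrite emb_flatten; apply: eq_bigr => t _; rewrite emb_scale. Qed.

Lemma subst_word_cons (f g : fa K) b w :
  subst_word f g (b :: w) = fa_mul (if b then g else f) (subst_word f g w).
Proof. by []. Qed.

Lemma emb_subst_word_cat f g w v :
  emb (subst_word f g (w ++ v)) = emb (subst_word f g w) * emb (subst_word f g v).
Proof.
elim: w => [|b w IH]; first by rewrite emb_one mul1r.
by rewrite cat_cons !subst_word_cons !emb_mul IH; apply: mulrA.
Qed.

Lemma emb_substE f g u :
  emb (fa_subst f g u) = \sum_(t <- u) t.1 *: emb (subst_word f g t.2).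
Proof. by rewrite emb_flatten; apply: eq_bigr => t _; rewrite emb_scale. Qed.

Lemma emb_subst_mul f g u v :
  emb (fa_subst f g (fa_mul u v)) = emb (fa_subst f g u) * emb (fa_subst f g v).
Proof.
rewrite !emb_substE big_allpairs_dep mulr_suml; apply: eq_bigr => s _.
rewrite mulr_sumr; apply: eq_bigr => t _.
by rewrite emb_subst_word_cat malg_scaleM.
Qed.

Lemma emb_subst_lincomb f g s :
  emb (fa_subst f g (lincomb_uab s)) =
  \sum_(t <- s) t.1 *: emb (fa_subst f g (u_ab K t.2)).
Proof.
rewrite emb_substE big_flatten big_map; apply: eq_bigr => t _.
rewrite big_map emb_substE scaler_sumr; apply: eq_bigr => t' _.
by rewrite scalerA.
Qed.

Lemma emb_subst_x f g : emb (fa_subst f g (fa_x K)) = emb f.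
Proof. by rewrite emb_substE big_seq1 scale1r /= emb_mul emb_one mulr1. Qed.

Lemma emb_subst_y f g : emb (fa_subst f g (fa_y K)) = emb g.
Proof. by rewrite emb_substE big_seq1 scale1r /= emb_mul emb_one mulr1. Qed.

Lemma emb_subst_pow f g u n : emb (fa_subst f g (fa_pow u n)) = emb (fa_subst f g u) ^+ n.
Proof.
elim: n => [|n IH]; last by rewrite exprS /= emb_subst_mul IH.
by rewrite emb_substE big_seq1 scale1r emb_one.
Qed.

Lemma emb_subst_add f g u v :
  emb (fa_subst f g (fa_add u v)) = emb (fa_subst f g u) + emb (fa_subst f g v).
Proof. by rewrite !emb_substE big_cat. Qed.

Lemma emb_subst_scale f g c u :
  emb (fa_subst f g (fa_scale c u)) = c *: emb (fa_subst f g u).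
Proof.
rewrite !emb_substE big_map scaler_sumr; apply: eq_bigr => t _.
by rewrite scalerA.
Qed.

Lemma emb_subst_comm f g :
  emb (fa_subst f g (fa_comm K)) = emb f * emb g - emb g * emb f.
Proof.
rewrite emb_subst_add emb_subst_scale !emb_subst_mul.
by rewrite emb_subst_x emb_subst_y scaleN1r.
Qed.

(* Used with [phi] = [emb] and with [emb] after rho; the image of the block
   x^a y^b has the leading word of the block [iota (a, b)]. *)
Section LeadOfUab.
Variables (phi : fa K -> Kxy) (iota : nat * nat -> nat * nat).
Hypothesis phi_mul : forall u v, phi (fa_mul u v) = phi u * phi v.
Hypothesis lead_block :
  forall a b, is_lead (lead_word [:: iota (a, b)]) (phi (fa_block K a b)).
Hypothesis lead_comm : is_lead [:: true; false] (phi (fa_comm K)).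

Lemma is_lead_uab ab :
  (0 < size ab)%N -> is_lead (lead_word (map iota ab)) (phi (u_ab K ab)).
Proof.
elim: ab => [|[a b] [|q rest] IH] // _; first exact: lead_block.
have -> : u_ab K [:: (a, b), q & rest] =
  fa_mul (fa_block K a b) (fa_mul (fa_comm K) (u_ab K (q :: rest))) by [].
rewrite phi_mul [phi (fa_mul (fa_comm K) _)]phi_mul [map _ _]/= lead_word_cons.
exact: is_leadM (lead_block a b) (is_leadM lead_comm (IH isT)).
Qed.

Lemma is_lead_lincomb_uab (s : seq (K * seq (nat * nat))) :
  s != [::] -> uniq [seq map iota t.2 | t <- s] ->
  all (fun t => t.1 != 0) s -> all (fun t => (0 < size t.2)%N) s ->
  exists2 t0, t0 \in s &
    is_lead (lead_word (map iota t0.2)) (\sum_(t <- s) t.1 *: phi (u_ab K t.2)) /\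
    key (lead_word (map iota t0.2)) = \max_(t <- s) key (lead_word (map iota t.2)).
Proof.
move=> s_ne us /allP nz /allP ne; apply: is_lead_sum => //.
  rewrite (map_comp lead_word) map_inj_in_uniq // => _ _ /mapP[t ts ->] /mapP[t' t's ->].
  by apply: lead_word_inj; rewrite size_map; [apply: ne | apply: ne].
by move=> t ts; apply: is_leadZ (nz t ts) (is_lead_uab (ne t ts)).
Qed.

End LeadOfUab.

Lemma is_lead_emb_lincomb_uab (s : seq (K * seq (nat * nat))) :
  s != [::] -> uniq [seq t.2 | t <- s] ->
  all (fun t => t.1 != 0) s -> all (fun t => (0 < size t.2)%N) s ->
  exists2 t0, t0 \in s & is_lead (lead_word t0.2) (emb (lincomb_uab s)) /\
    key (lead_word t0.2) = \max_(t <- s) key (lead_word t.2).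
Proof.
move=> s_ne us nz ne; rewrite emb_lincomb.
have lead_block a b : is_lead (lead_word [:: id (a, b)]) (emb (fa_block K a b)).
  by rewrite emb_block; apply: is_lead_mono.
have lead_comm : is_lead [:: true; false] (emb (fa_comm K)).
  by rewrite emb_comm; apply: is_lead_comm.
have [|t0 t0s] := @is_lead_lincomb_uab emb id emb_mul lead_block lead_comm s s_ne _ nz ne.
  by under eq_map do rewrite map_id.
by rewrite map_id; under eq_bigr do rewrite map_id; exists t0.
Qed.

Lemma is_lead_rho_x (alpha : K) (p : {poly K}) : (2 <= (size p).-1)%N ->
  is_lead (nseq (size p).-1 true) (emb (fa_add (fa_scale alpha (fa_x K)) (poly_y p))).
Proof.
move=> hk; set k := (size p).-1 in hk *.
have sp : size p = k.+1 by move: hk; rewrite /k; case: (size p).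
have pk : p`_k != 0 by rewrite -lead_coefE lead_coef_eq0 -size_poly_gt0 sp.
rewrite emb_cat emb_scale emb_x emb_poly_y sp -addn1 iotaD big_cat big_seq1 /=.
rewrite [_ + p`_k *: _]addrC addrCA; apply: is_leadD.
  exact: is_leadZ (is_lead_mono _).
move=> v /mcoeffD_neq0[/mcoeffZ_mono_neq0-> | ].
  by apply: key_lt_size; rewrite size_nseq.
rewrite raddf_sum => /sum_neq0/hasP[i]; rewrite mem_iota => /andP[_ ik].
by move=> /mcoeffZ_mono_neq0->; apply: key_lt_size; rewrite !size_nseq.
Qed.

Lemma is_lead_rho_y (beta gamma : K) : beta != 0 ->
  is_lead [:: true] (emb (fa_add (fa_scale beta (fa_y K)) (fa_const gamma))).
Proof.
move=> hb; rewrite emb_cat emb_scale emb_y emb_const; apply: is_leadD.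
  exact: is_leadZ (is_lead_mono _).
by move=> v; rewrite -[gamma%:MP]mulr1 mul_malgC -mono_nil => /mcoeffZ_mono_neq0->.
Qed.

Lemma emb_poly_y_comm (p : {poly K}) :
  emb (poly_y p) * mono [:: true] = mono [:: true] * emb (poly_y p).
Proof.
rewrite emb_poly_y mulr_suml [RHS]mulr_sumr; apply: eq_bigr => i _.
rewrite -scalerAl -malg_scalerAr !mono_mul; congr (_ *: mono _).
by elim: i => //= i ->.
Qed.

Lemma is_lead_rho_lincomb_uab (s : seq (K * seq (nat * nat))) alpha beta gamma
    (p : {poly K}) :
  alpha != 0 -> beta != 0 -> (2 <= (size p).-1)%N ->
  s != [::] -> uniq [seq rho_index (size p).-1 t.2 | t <- s] ->
  all (fun t => t.1 != 0) s -> all (fun t => (0 < size t.2)%N) s ->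
  exists2 t0, t0 \in s &
    is_lead (lead_word (rho_index (size p).-1 t0.2))
      (emb (rho_tri alpha beta gamma p (lincomb_uab s))) /\
    key (lead_word (rho_index (size p).-1 t0.2)) =
      \max_(t <- s) key (lead_word (rho_index (size p).-1 t.2)).
Proof.
move=> ha hb hk s_ne us nz ne; rewrite /rho_tri emb_subst_lincomb.
apply: (@is_lead_lincomb_uab (emb \o fa_subst _ _) (fun q => (0, (size p).-1 * q.1 + q.2))
  _ _ _ s s_ne us nz ne).
- exact: emb_subst_mul.
- move=> a b; rewrite /comp emb_subst_mul !emb_subst_pow emb_subst_x emb_subst_y.
  rewrite [lead_word _]/= nseqD -[in nseq b _](mul1n b).
  apply: is_leadM; first exact/is_lead_nseqX/is_lead_rho_x.
  exact/is_lead_nseqX/is_lead_rho_y.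
- have CZ (z : Kxy) : gamma%:MP * z = z * gamma%:MP by rewrite mul_malgC malg_mulC.
  rewrite /comp emb_subst_comm [emb (fa_add (fa_scale alpha _) _)]emb_cat emb_scale emb_x.
  rewrite emb_cat emb_scale emb_y emb_const.
  rewrite (commutator_affine malg_scalerAr (emb_poly_y_comm p) CZ).
  rewrite (mono_mul [:: false]) (mono_mul [:: true]).
  exact: is_leadZ (mulf_neq0 ha hb) is_lead_comm.
Qed.

Lemma inV_balanced (u : fa K) w : inV u -> fa_coef u w != 0 -> count id w = count negb w.
Proof.
move=> [n [c ->]]; rewrite -emb_coef emb_flatten raddf_sum => /sum_neq0/hasP[i _].
rewrite /= emb_scale emb_pow emb_comm mcoeffZ mulf_eq0 negb_or => /andP[_].
exact: comm_pow_balanced.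
Qed.

Lemma fa_coef_hom_comp (u : fa K) d w :
  size w = d -> fa_coef (hom_comp u d) w = fa_coef u w.
Proof.
move=> sw; rewrite /fa_coef /hom_comp big_filter_cond; apply: eq_bigl => t.
by case: (t.2 =P w) => [->|]; rewrite ?andbF ?sw ?eqxx.
Qed.

End FreeAlgebra.

Section Corollary.
Variables (K : fieldType) (s : seq (K * seq (nat * nat))).
Variables (alpha beta gamma : K) (p : {poly K}).
Hypotheses (us : uniq [seq t.2 | t <- s]) (nz : all (fun t => t.1 != 0%R) s).
Hypotheses (ne : all (fun t => 0 < size t.2) s) (s_ne : s != [::]).
Hypotheses (ha : alpha != 0%R) (hb : beta != 0%R) (hk : 2 <= (size p).-1).
Local Notation u := (lincomb_uab s).
Local Notation k := (size p).-1.

Lemma size_lead_word_le_fa_deg t : t \in s -> size (lead_word t.2) <= fa_deg u.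
Proof.
have [t0 t0s [lead_u max_u]] := is_lead_emb_lincomb_uab s_ne us nz ne.
move=> ts; rewrite (fa_deg_lead lead_u); apply: leq_key_size.
by rewrite max_u (leq_bigmax_seq t).
Qed.

Lemma fa_deg_rho_lincomb_uab :
  all (fun t => all (fun ab => ab.1 == 0) t.2) s ->
  fa_deg u = fa_deg (rho_tri alpha beta gamma p u).
Proof.
move=> /allP a0; have rho_id t : t \in s -> rho_index k t.2 = t.2.
  by move=> ts; apply/rho_index_id/a0.
have [t0 t0s [lead_u max_u]] := is_lead_emb_lincomb_uab s_ne us nz ne.
have [|t1 t1s [lead_r max_r]] :=
    @is_lead_rho_lincomb_uab K s alpha beta gamma p ha hb hk s_ne _ nz ne.
  by rewrite (_ : [seq _ | t <- s] = [seq t.2 | t <- s]) //; apply/eq_in_map => t /rho_id.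
rewrite (fa_deg_lead lead_u) (fa_deg_lead lead_r); congr size; apply: key_inj.
by rewrite max_u max_r; apply: eq_big_seq => t ts; rewrite rho_id.
Qed.

Lemma hom_comp_rho_lincomb_uab_notin_V :
  has (fun t => has (fun ab => ab.1 != 0) t.2) s -> fa_deg u < k ->
  exists d, k <= d /\ ~ inV (hom_comp (rho_tri alpha beta gamma p u) d).
Proof.
move=> /hasP[t2 t2s /hasP[q qt2 q1]] deg_lt.
have b_lt t : t \in s -> all (fun q => q.2 < k) t.2.
  move=> ts; apply/allP => q' q't; apply: leq_ltn_trans deg_lt.
  apply: leq_trans (size_lead_word_le_fa_deg ts).
  exact: leq_trans (leq_addl _ _) (pair_le_size_lead_word q't).
have [|t1 t1s [[lead_r _] max_r]] :=
    @is_lead_rho_lincomb_uab K s alpha beta gamma p ha hb hk s_ne _ nz ne.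
  have -> : [seq rho_index k t.2 | t <- s] = map (rho_index k) [seq t.2 | t <- s].
    by rewrite -map_comp.
  rewrite map_inj_in_uniq // => _ _ /mapP[t ts ->] /mapP[t' t's ->].
  by apply: rho_index_inj; apply: b_lt.
set W := lead_word (rho_index k t1.2) in lead_r max_r *.
have k_le_W : k <= size W.
  apply: (@leq_trans (size (lead_word (rho_index k t2.2)))).
    apply: leq_trans _ (@pair_le_size_lead_word (rho_index k t2.2) _ (map_f _ qt2)).
    by rewrite /= add0n; apply: leq_trans (leq_addr _ _); rewrite leq_pmulr // lt0n.
  by apply: leq_key_size; rewrite max_r (leq_bigmax_seq t2).
exists (size W); split => // /(@inV_balanced K _ W).
rewrite fa_coef_hom_comp // -emb_coef => /(_ lead_r).
move=> /(rho_index_balanced (ltnW hk) (allP ne t1 t1s)) /(rho_index_id k) eqW.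
move: k_le_W; rewrite /W eqW => k_le.
by have := leq_ltn_trans (size_lead_word_le_fa_deg t1s) deg_lt; rewrite ltnNge k_le.
Qed.

End Corollary.

Theorem corollary2p4 (K : fieldType) (s : seq (K * seq (nat * nat)))
  (alpha beta gamma : K) (p : {poly K}) :
  (* s is the expansion of u in the basis u_ab: distinct indices, nonzero
     coefficients, each index a list of r+1 >= 1 pairs (a_i, b_i) *)
  uniq [seq t.2 | t <- s] ->
  all (fun t => t.1 != 0%R) s ->
  all (fun t => 0 < size t.2) s ->
  ~ inV (lincomb_uab s) ->
  alpha != 0%R -> beta != 0%R -> 2 <= (size p).-1 ->
  ((all (fun t => all (fun ab => ab.1 == 0) t.2) s) ->
     fa_deg (lincomb_uab s) = fa_deg (rho_tri alpha beta gamma p (lincomb_uab s)))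
  /\
  ((has (fun t => has (fun ab => ab.1 != 0) t.2) s) ->
     fa_deg (lincomb_uab s) < (size p).-1 ->
     exists d, (size p).-1 <= d /\
       ~ inV (hom_comp (rho_tri alpha beta gamma p (lincomb_uab s)) d)).
Proof.
move=> us nz ne notV ha hb hk.
have s_ne : s != [::] by apply/eqP => s0; apply: notV; rewrite s0; exists 0, (fun=> 0%R).
split; first exact: fa_deg_rho_lincomb_uab.
exact: hom_comp_rho_lincomb_uab_notin_V.
Qed.
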